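(* Let $\bm X=(X_k:k\in V)$ have standard exponential margins and follow a tree geometric extremal graphical model with gauge $$g(\bm x)=\sum_{\{i,j\}\in E}\big(g_{\{i,j\}}(x_i,x_j)-x_i-x_j\big)+\sum_{k\in V}x_k,$$ where for each edge $g_{\{i,j\}}(x_i,x_j)=\frac{x_i}{\theta_{ij}}+\frac{x_j}{\gamma_{ij}}+\Big(1-\frac{1}{\theta_{ij}}-\frac{1}{\gamma_{ij}}\Big)\min(x_i,x_j)$ with $\theta_{ij},\gamma_{ij}\in(0,1)$. For $k<l$ in $V$, let $\mathrm{pa}(k,l)$ be the set of edges along the shortest path from $k$ to $l$, each written as an ordered pair $(i,j)$ with $i$ the endpoint nearer to $k$. Then $$g_{\{k,l\}}(x_k,x_l)=\frac{x_k}{\max_{(i,j)\in\mathrm{pa}(k,l)}\theta_{ij}}+\frac{x_l}{\max_{(i,j)\in\mathrm{pa}(k,l)}\gamma_{ij}}+\Big(1-\frac{1}{\max_{(i,j)\in\mathrm{pa}(k,l)}\theta_{ij}}-\frac{1}{\max_{(i,j)\in\mathrm{pa}(k,l)}\gamma_{ij}}\Big)\min(x_k,x_l).$$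
   Context: A tree is a connected acyclic graph $(V,E)$. $g_{\{k,l\}}(x_k,x_l)=\min_{x_s\ge0,\,s\notin\{k,l\}}g(\bm x)$ is the bivariate marginal gauge. The parameterization of an edge's gauge depends on orientation: writing the edge as $(j,i)$ instead of $(i,j)$ corresponds to $\theta_{ji}=\gamma_{ij}$ and $\gamma_{ji}=\theta_{ij}$. *)

From HB Require Import structures.
From mathcomp Require Import all_boot all_order all_algebra.
From mathcomp Require Import reals.
Set Implicit Arguments. Unset Strict Implicit. Unset Printing Implicit Defensive.
Import Order.TTheory GRing.Theory Num.Theory.
Local Open Scope ring_scope.

Definition simple_graph (d : nat) (e : rel 'I_d) : Prop :=
  (forall i, ~~ e i i) /\ (forall i j, e i j = e j i).

Definition has_cycle (d : nat) (e : rel 'I_d) : Prop :=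
  exists (v0 : 'I_d) (c : seq 'I_d),
    [/\ 2 <= size c, uniq (v0 :: c), path e v0 c & e (last v0 c) v0]%N.

Definition is_tree (d : nat) (e : rel 'I_d) : Prop :=
  [/\ simple_graph e, (forall u v, connect e u v) & ~ has_cycle e].

Definition edge_gauge (R : realType) (th ga xi xj : R) : R :=
  xi / th + xj / ga + (1 - th^-1 - ga^-1) * Num.min xi xj.

(* Tree gauge; each edge {i,j} counted once as the ordered pair (i,j), i < j,
   parameterized by th i j, ga i j. *)
Definition tree_gauge (R : realType) (d : nat) (e : rel 'I_d)
    (th ga : 'I_d -> 'I_d -> R) (x : 'I_d -> R) : R :=
  \sum_(i < d) \sum_(j < d | (i < j)%N && e i j)
      (edge_gauge (th i j) (ga i j) (x i) (x j) - x i - x j)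
  + \sum_(k < d) x k.

Definition path_edges (d : nat) (k : 'I_d) (p : seq 'I_d) : seq ('I_d * 'I_d) :=
  zip (k :: p) p.

(* Maximum of f over the (oriented) path edges; all values are positive here,
   so 0 is a neutral start. *)
Definition path_max (R : realType) (d : nat) (f : 'I_d -> 'I_d -> R)
    (k : 'I_d) (p : seq 'I_d) : R :=
  \big[Num.max/0]_(ij <- path_edges k p) f ij.1 ij.2.

From HB Require Import structures.
From mathcomp Require Import all_boot all_order all_algebra.
From mathcomp Require Import reals.
From mathcomp Require Import lra ring.
Set Implicit Arguments. Unset Strict Implicit. Unset Printing Implicit Defensive.
Import Order.TTheory GRing.Theory Num.Theory.
Local Open Scope ring_scope.

(* Write g(x) = (sum_v x_v - sum_{ij in E} min(x_i, x_j)) + sum_{ij in E} e_ij(x) with the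
   nonnegative edge excess e_ij(x) = (1/theta_ij - 1)(x_i - x_j)_+ + (1/gamma_ij - 1)(x_j - x_i)_+.
   On a forest the first bracket is at least max_v x_v.  Along the path from k to l, the
   triangle inequality for (.)_+ and the monotonicity of the excess in its parameters bound
   the excesses of the path edges from below by the excess of (x_k, x_l) computed with the
   path maxima of theta and gamma: this is the lower bound.  For the upper bound, cut the
   path edge where the relevant maximum (of theta if x_l <= x_k, of gamma otherwise) is
   attained, and let x be x_k on the side of k and x_l on the side of l: only the cut edge
   has a nonzero excess, and the first bracket equals max(x_k, x_l). *)

Section Graphs.
Variable T : finType.
Implicit Types (E : rel T) (a b c : T) (S : {set T}).

Definition del_edge E a b : rel T :=
  fun i j => E i j && ~~ ((i == a) && (j == b) || (i == b) && (j == a)).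

Lemma del_edge_sub E a b : subrel (del_edge E a b) E.
Proof. by move=> i j /andP[]. Qed.

Lemma del_edgeC E a b : del_edge E a b =2 del_edge E b a.
Proof. by move=> i j; rewrite /del_edge orbC. Qed.

Lemma del_edge_sym E a b : symmetric E -> symmetric (del_edge E a b).
Proof.
by move=> sE i j; rewrite /del_edge sE orbC [(j == b) && _]andbC [(j == a) && _]andbC.
Qed.

Lemma card_del_edge E a b : E a b ->
  (#|[pred q : T * T | del_edge E a b q.1 q.2]| < #|[pred q : T * T | E q.1 q.2]|)%N.
Proof.
move=> Eab; apply: proper_card; apply/properP; split.
  by apply/subsetP => -[i j]; rewrite !inE; apply: del_edge_sub.
by exists (a, b); rewrite !inE /del_edge /= ?Eab ?eqxx.
Qed.

Lemma path_del_edge E a b v q : path E v q -> a \notin v :: q -> path (del_edge E a b) v q.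
Proof.
move=> pq aq; have aP : all (predC1 a) (v :: q).
  by apply/allP => y yq; apply: contraNneq aq => <-.
apply: (sub_in_path (P := predC1 a)) aP pq => i j /= ia ja Eij.
by rewrite /del_edge Eij (negbTE ia) (negbTE ja) andbF.
Qed.

Definition disconnected E S := {in S &, forall s t, connect E s t -> s = t}.

Lemma disconnectedU1 E E' S c : connect_sym E' -> subrel E' E ->
  disconnected E S -> {in S, forall s, ~~ connect E' c s} -> disconnected E' (c |: S).
Proof.
move=> sE' subE dS cS s t; have subC := connect_sub (fun i j Eij => connect1 (subE i j Eij)).
rewrite !in_setU1 => /orP[/eqP-> | sS] /orP[/eqP-> | tS] //.
- by move=> ct; have := cS t tS; rewrite ct.
- by rewrite sE' => cs; have := cS s sS; rewrite cs.
- by move=> st; apply: dS => //; apply: subC.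
Qed.

Lemma disconnected_del_edge E S a b : symmetric E -> E a b ->
    ~~ connect (del_edge E a b) a b -> disconnected E S ->
  exists c, [/\ c \in [:: a; b], c \notin S & disconnected (del_edge E a b) (c |: S)].
Proof.
set E' := del_edge E a b => sE Eab nab dS.
have sE' : connect_sym E' := sym_connect_sym (del_edge_sym a b sE).
have subE := @del_edge_sub E a b.
have subC := connect_sub (fun i j Eij => connect1 (subE i j Eij)).
have [c [cab cS]] : exists c, c \in [:: a; b] /\ {in S, forall s, ~~ connect E' c s}.
  case: (pickP [pred s | (s \in S) && connect E' s a]) => [s /andP[sS sa] | noa].
    exists b; split; first by rewrite !inE eqxx orbT.
    move=> t tS; apply/negP => bt.
    have est : s = t.
      apply: dS => //; apply: connect_trans (subC _ _ sa) _.
      exact: connect_trans (connect1 Eab) (subC _ _ bt).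
    by move: nab; rewrite -est in bt; rewrite sE' (connect_trans bt sa).
  exists a; split; first by rewrite mem_head.
  by move=> s sS; rewrite sE'; apply/negP => sa; have := noa s; rewrite /= sS sa.
exists c; split => //; last exact: disconnectedU1 sE' subE dS cS.
by apply: contraT; rewrite negbK => /cS; rewrite connect0.
Qed.

Lemma exists_parent E r : (forall w, connect E r w) ->
  exists (par : T -> T) (h : T -> nat),
    forall w, w != r -> E (par w) w && (h (par w) < h w)%N.
Proof.
move=> conn.
pose P w n := [exists t : n.-tuple T, path E r t && (last r t == w)].
have Pex w : exists n, P w n.
  case/connectP: (conn w) => q pq ->.
  by exists (size q); apply/existsP; exists (in_tuple q); rewrite /= pq eqxx.
pose h w := ex_minn (Pex w).
have step w : w != r -> exists u, E u w && (h u < h w)%N.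
  rewrite /h; case: ex_minnP => n /existsP[t /andP[]] + + _ wr.
  case/lastP: (tval t) (size_tuple t) => [|q u] /=.
    by move=> _ _ /eqP rw; rewrite rw eqxx in wr.
  rewrite rcons_path last_rcons size_rcons => <- /andP[pq Eu] /eqP uw; subst u.
  exists (last r q); rewrite Eu; case: ex_minnP => m _; apply.
  by apply/existsP; exists (in_tuple q); rewrite /= pq eqxx.
exists (fun w => odflt r [pick u | E u w && (h u < h w)%N]), h => w wr.
by case: pickP => [// | none]; have [u] := step w wr; rewrite none.
Qed.

End Graphs.

Section Forest.
Variable d : nat.
Implicit Types (E : rel 'I_d) (a b : 'I_d).

Lemma acyclic_del_edge E a b : ~ has_cycle E -> ~ has_cycle (del_edge E a b).
Proof.
move=> nc [v0 [c [c2 uc pc lc]]]; apply: nc; exists v0, c; split => //.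
  exact: sub_path (@del_edge_sub _ E a b) _ _ pc.
exact: del_edge_sub lc.
Qed.

Lemma del_edge_disconnects E a b : symmetric E -> ~ has_cycle E -> E a b -> a != b ->
  ~~ connect (del_edge E a b) a b.
Proof.
move=> sE nc Eab nab; apply/negP => /connectP[p pth].
case: (shortenP pth) => c pc uc _ lc; apply: nc; exists a, c; split => //.
- case: c pc uc lc => [|c1 [|c2 c]] //=; first by move=> _ _ ba; rewrite ba eqxx in nab.
  by move=> /andP[+ _] _ ba; rewrite -ba /del_edge !eqxx andbF.
- exact: sub_path (@del_edge_sub _ E a b) _ _ pc.
- by rewrite -lc sE.
Qed.

Lemma path_edges_rel E k p u v : path E k p -> (u, v) \in path_edges k p -> E u v.
Proof.
elim: p k => [|w p IH] k //= /andP[Ekw pth].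
by rewrite in_cons => /orP[/eqP[-> ->] // | /IH]; apply.
Qed.

Lemma del_path_edge_separates E k p1 v p2 : symmetric E -> ~ has_cycle E ->
    path E k (p1 ++ v :: p2) -> uniq (k :: p1 ++ v :: p2) ->
  let E' := del_edge E (last k p1) v in
  [/\ ~~ connect E' v (last k p1), ~~ connect E' v k & connect E' v (last v p2)].
Proof.
rewrite -cat_cons cat_path cat_uniq => sE nc /andP[pth1 /= /andP[Euv pth2]] /and3P[_ dis _].
set E' := del_edge E (last k p1) v.
have vp1 : v \notin k :: p1 by apply: contra dis => ->.
have up2 : last k p1 \notin v :: p2.
  rewrite in_cons negb_or; apply/andP; split.
    by apply: contraNneq vp1 => <-; rewrite mem_last.
  apply: contra dis => up2; apply/orP; right.
  by apply/hasP; exists (last k p1); rewrite ?mem_last.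
have uv : last k p1 != v by apply: contraNneq vp1 => <-; rewrite mem_last.
have sE' : connect_sym E' := sym_connect_sym (del_edge_sym _ _ sE).
have nvu : ~~ connect E' v (last k p1) by rewrite sE' del_edge_disconnects.
have ku : connect E' k (last k p1).
  by apply: path_connect (mem_last k p1); rewrite (eq_path (del_edgeC _ _ _)) path_del_edge.
split=> //; first by apply: contra nvu => vk; apply: connect_trans vk ku.
by apply: path_connect (mem_last v p2); apply: path_del_edge.
Qed.

End Forest.

Section EdgeSums.
Variables (R : realDomainType) (d : nat).
Implicit Types (E : rel 'I_d) (a b : 'I_d) (G : 'I_d -> 'I_d -> R) (x : 'I_d -> R).

Definition edge_sum E G : R :=
  \sum_(q : 'I_d * 'I_d | (q.1 < q.2)%N && E q.1 q.2) G q.1 q.2.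

Lemma edge_sum_del E G a b : symmetric E -> E a b -> a != b -> G b a = G a b ->
  edge_sum E G = G a b + edge_sum (del_edge E a b) G.
Proof.
have key (u v : 'I_d) : (u < v)%N -> E u v ->
    edge_sum E G = G u v + edge_sum (del_edge E u v) G.
  move=> uv Euv; rewrite /edge_sum (bigD1 (u, v)) ?uv ?Euv //=; congr (_ + _).
  apply: eq_bigl => -[i j] /=; rewrite /del_edge xpair_eqE.
  case: (ltnP i j) => //= ij; case: (E i j) => //=.
  case: (i =P v) => [iv | _]; case: (j =P u) => [ju | _] //=; rewrite ?andbF ?orbF //.
  by move: ij; rewrite iv ju => /(ltn_trans uv); rewrite ltnn.
move=> sE Eab; rewrite neq_ltn => /orP[ab | ba] Gba; first exact: key.
have Eba : E b a by rewrite sE.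
rewrite (key b a ba Eba) Gba; congr (_ + _).
by apply: eq_bigl => q; rewrite del_edgeC.
Qed.

(* Deleting an edge ab of a forest disconnects a from b, so one of them can join S, and its
   weight pays for min (x a) (x b). *)
Lemma edge_sum_min_forest E S x : symmetric E -> ~ has_cycle E -> (forall v, 0 <= x v) ->
  disconnected E S ->
  \sum_(s in S) x s + edge_sum E (fun i j => Num.min (x i) (x j)) <= \sum_v x v.
Proof.
move=> + + x0; have [n] := ubnP #|[pred q : 'I_d * 'I_d | E q.1 q.2]|.
elim: n E S => // n IH E S cardE sE nc dS.
have [[a b] /andP[/= ab Eab] | noE] :=
  pickP [pred q : 'I_d * 'I_d | (q.1 < q.2)%N && E q.1 q.2].
  have anb : a != b by rewrite neq_ltn ab.
  have [c [cab cS dS']] :=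
    disconnected_del_edge sE Eab (del_edge_disconnects sE nc Eab anb) dS.
  have IH' := IH _ _ (leq_trans (card_del_edge Eab) cardE) (del_edge_sym a b sE)
    (acyclic_del_edge nc) dS'.
  rewrite big_setU1 //= in IH'; rewrite (edge_sum_del sE Eab anb); last exact: minC.
  have : Num.min (x a) (x b) <= x c.
    by move: cab; rewrite !inE ge_min => /orP[] /eqP->; rewrite lexx ?orbT.
  lra.
rewrite [edge_sum _ _]big_pred0 // addr0 [leRHS](bigID [in S]) /= lerDl.
exact: sumr_ge0.
Qed.

Lemma edge_sum_path E G k p : symmetric E -> path E k p -> uniq (k :: p) ->
    (forall i j, E i j -> 0 <= G i j) -> (forall i j, E i j -> G i j = G j i) ->
  \sum_(q <- path_edges k p) G q.1 q.2 <= edge_sum E G.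
Proof.
elim: p E k => [|v p IH] E k sE /=.
  by move=> _ _ G0 _; rewrite big_nil; apply: sumr_ge0 => q /andP[_]; apply: G0.
move=> /andP[Ekv pth] /andP[kp up] G0 Gs.
have kv : k != v by apply: contraNneq kp => ->; rewrite mem_head.
rewrite big_cons (edge_sum_del sE Ekv kv); last by rewrite Gs // sE.
apply: lerD => //; apply: IH => //.
- exact: del_edge_sym.
- exact: path_del_edge.
- by move=> i j /del_edge_sub; apply: G0.
- by move=> i j /del_edge_sub; apply: Gs.
Qed.

Lemma edge_sum_parent E G r (par : 'I_d -> 'I_d) (h : 'I_d -> nat) : symmetric E ->
    (forall w, w != r -> E (par w) w && (h (par w) < h w)%N) ->
    (forall i j, E i j -> 0 <= G i j) -> (forall i j, E i j -> G i j = G j i) ->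
  \sum_(w | w != r) G w (par w) <= edge_sum E G.
Proof.
move=> sE hp G0 Gs.
pose sort_pair (w : 'I_d) := if (w < par w)%N then (w, par w) else (par w, w).
pose D := [set w : 'I_d | w != r].
have inj : {in D &, injective sort_pair}.
  move=> w1 w2; rewrite !inE => /hp/andP[_ h1] /hp/andP[_ h2].
  rewrite /sort_pair; case: ifP => _; case: ifP => _ [e1 e2] //.
  - by move: h1; rewrite e2 e1 ltnNge ltnW.
  - by move: h1; rewrite e1 e2 ltnNge ltnW.
have sortE w : w \in D ->
    ((sort_pair w).1 < (sort_pair w).2)%N && E (sort_pair w).1 (sort_pair w).2
    /\ G w (par w) = G (sort_pair w).1 (sort_pair w).2.
  rewrite inE => /hp/andP[Ew hw].
  have wp : (w : nat) != par w by apply: contraTneq hw => /val_inj <-; rewrite ltnn.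
  rewrite /sort_pair; case: (ltngtP w (par w)) wp => // [lt | gt] _ /=.
    by rewrite lt -sE Ew.
  by rewrite gt Ew Gs // sE.
rewrite (eq_bigl [in D]) => [|w]; last by rewrite inE.
rewrite (eq_bigr (fun w => G (sort_pair w).1 (sort_pair w).2)) => [|w /sortE[]//].
rewrite -(big_imset (fun q => G q.1 q.2) inj) /= /edge_sum.
rewrite [leRHS](bigID [in sort_pair @: D]) /=.
have -> : \sum_(q : 'I_d * 'I_d | (q.1 < q.2)%N && E q.1 q.2 && (q \in sort_pair @: D))
    G q.1 q.2 = \sum_(q in sort_pair @: D) G q.1 q.2.
  apply: eq_bigl => q; case: (boolP (q \in _)) => [/imsetP[w /sortE[sw _] ->] | _];
  by rewrite ?sw ?andbF.
by rewrite lerDl; apply: sumr_ge0 => q /andP[/andP[_ Eq] _]; apply: G0.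
Qed.

End EdgeSums.

Section EdgeExcess.
Variable R : realFieldType.
Implicit Types (t g a b c : R).

Definition pos_part a := Num.max a 0.

Lemma pos_part_ge0 a : 0 <= pos_part a.
Proof. by rewrite le_max lexx orbT. Qed.

Lemma pos_partD a b : pos_part (a + b) <= pos_part a + pos_part b.
Proof. by rewrite ge_max !lerD ?le_max ?lexx ?addr_ge0 ?pos_part_ge0. Qed.

Lemma pos_part_id a : 0 <= a -> pos_part a = a.
Proof. exact: max_l. Qed.

Lemma pos_part_eq0 a : a <= 0 -> pos_part a = 0.
Proof. exact: max_r. Qed.

Definition edge_excess t g a b :=
  (t^-1 - 1) * pos_part (a - b) + (g^-1 - 1) * pos_part (b - a).

Lemma edge_excessC t g a b : edge_excess t g a b = edge_excess g t b a.
Proof. exact: addrC. Qed.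

Lemma edge_excessxx t g a : edge_excess t g a a = 0.
Proof. by rewrite /edge_excess subrr pos_part_eq0 // !mulr0 addr0. Qed.

Lemma inv_sub1_ge0 t : 0 < t <= 1 -> 0 <= t^-1 - 1.
Proof. by case/andP=> t0 t1; rewrite subr_ge0 invf_ge1. Qed.

Lemma edge_excess_ge0 t g a b : 0 < t <= 1 -> 0 < g <= 1 -> 0 <= edge_excess t g a b.
Proof.
by move=> /inv_sub1_ge0 ? /inv_sub1_ge0 ?; rewrite addr_ge0 ?mulr_ge0 ?pos_part_ge0.
Qed.

Lemma edge_excess_triangle t g a b c : 0 < t <= 1 -> 0 < g <= 1 ->
  edge_excess t g a c <= edge_excess t g a b + edge_excess t g b c.
Proof.
move=> /inv_sub1_ge0 t0 /inv_sub1_ge0 g0; rewrite /edge_excess addrACA -!mulrDr.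
have split_diff u v w : pos_part (u - w) <= pos_part (u - v) + pos_part (v - w).
  by have := pos_partD (u - v) (v - w); rewrite addrA subrK.
by apply: lerD; apply: ler_wpM2l => //; rewrite ?[pos_part (b - a) + _]addrC split_diff.
Qed.

Lemma edge_excess_anti t g t' g' a b : 0 < t <= t' -> 0 < g <= g' ->
  edge_excess t' g' a b <= edge_excess t g a b.
Proof.
move=> /andP[t0 tt'] /andP[g0 gg'].
have t'0 := lt_le_trans t0 tt'; have g'0 := lt_le_trans g0 gg'.
by rewrite lerD // ler_wpM2r ?pos_part_ge0 // lerD2r lef_pV2 ?posrE.
Qed.

Lemma edge_excess_path d (th ga : 'I_d -> 'I_d -> R) t g (x : 'I_d -> R) k p :
    0 < t <= 1 -> 0 < g <= 1 ->
    (forall u v, (u, v) \in path_edges k p -> 0 < th u v <= t /\ 0 < ga u v <= g) ->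
  edge_excess t g (x k) (x (last k p)) <=
  \sum_(q <- path_edges k p) edge_excess (th q.1 q.2) (ga q.1 q.2) (x q.1) (x q.2).
Proof.
move=> t1 g1; elim: p k => [|v p IH] k bounds /=; first by rewrite edge_excessxx big_nil.
rewrite big_cons (le_trans (edge_excess_triangle _ (x v) _ t1 g1)) // lerD //.
  by have [] := bounds k v (mem_head _ _); apply: edge_excess_anti.
by apply: IH => u w uw; apply: bounds; rewrite in_cons uw orbT.
Qed.

End EdgeExcess.

Section GaugeAlgebra.
Variable R : realType.
Implicit Types (t g a b : R).

Lemma edge_gaugeE t g a b : edge_gauge t g a b = Num.max a b + edge_excess t g a b.
Proof.
rewrite /edge_gauge /edge_excess; case: (leP a b) => ab.
  by rewrite (pos_part_eq0 (a := a - b)) ?subr_le0 // pos_part_id ?subr_ge0 //; ring.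
rewrite (pos_part_eq0 (a := b - a)) ?subr_le0 ?ltW // pos_part_id ?subr_ge0 ?ltW //; ring.
Qed.

Lemma edge_gauge_ge t g a b : b <= a -> edge_gauge t g a b = a + (t^-1 - 1) * (a - b).
Proof.
move=> ba; rewrite edge_gaugeE /edge_excess (max_l ba).
rewrite (pos_part_id (a := a - b)) ?subr_ge0 //.
by rewrite pos_part_eq0 ?subr_le0 // mulr0 addr0.
Qed.

Lemma edge_gauge_le t g a b : a <= b -> edge_gauge t g a b = b + (g^-1 - 1) * (b - a).
Proof.
move=> ab; rewrite edge_gaugeE /edge_excess (max_r ab).
rewrite (pos_part_id (a := b - a)) ?subr_ge0 //.
by rewrite pos_part_eq0 ?subr_le0 // mulr0 add0r.
Qed.

Lemma tree_gaugeE d (E : rel 'I_d) th ga (x : 'I_d -> R) :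
  tree_gauge E th ga x = \sum_k x k - edge_sum E (fun i j => Num.min (x i) (x j))
    + edge_sum E (fun i j => edge_excess (th i j) (ga i j) (x i) (x j)).
Proof.
rewrite /tree_gauge pair_big_dep /= [RHS]addrAC -[RHS]addrA -sumrB [LHS]addrC.
congr (_ + _); apply: eq_bigr => -[i j] _ /=.
by have := addr_max_min (x i) (x j); rewrite edge_gaugeE; lra.
Qed.

Lemma path_max_ge d (f : 'I_d -> 'I_d -> R) k p u v :
  (u, v) \in path_edges k p -> f u v <= path_max f k p.
Proof. by move=> uv; apply: (le_bigmax_seq _ _ xpredT (fun q : 'I_d * 'I_d => f q.1 q.2) uv). Qed.

Lemma path_max_attained d (E : rel 'I_d) (f : 'I_d -> 'I_d -> R) k p :
    path E k p -> (forall i j, E i j -> 0 <= f i j) -> p != [::] ->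
  exists p1 v p2, p = p1 ++ v :: p2 /\ path_max f k p = f (last k p1) v.
Proof.
elim: p k => [|v p IH] k //= /andP[Ekv pth] f0 _.
have -> : path_max f k (v :: p) = Num.max (f k v) (path_max f v p).
  by rewrite /path_max big_cons.
case: p IH pth => [|w p] IH pth.
  by exists [::], v, [::]; rewrite /path_max big_nil max_l ?f0.
have [p1 [u [p2 [-> fmax]]]] := IH v pth f0 isT.
case: (leP (path_max f v (p1 ++ u :: p2)) (f k v)) => [le | lt].
  by exists [::], v, (p1 ++ u :: p2).
by exists (v :: p1), u, p2.
Qed.

Lemma path_max_in01 d (E : rel 'I_d) (f : 'I_d -> 'I_d -> R) k p :
    path E k p -> p != [::] -> (forall i j, E i j -> 0 < f i j <= 1) ->
  0 < path_max f k p <= 1.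
Proof.
move=> pth p_nil f01; have f0 i j (Eij : E i j) : 0 <= f i j by case/andP: (f01 i j Eij) => /ltW.
have [p1 [v [p2 [pE ->]]]] := path_max_attained pth f0 p_nil.
by apply: f01; move: pth; rewrite pE cat_path => /andP[_ /andP[]].
Qed.

End GaugeAlgebra.

Section TreeGauge.
Variables (R : realType) (d : nat) (e : rel 'I_d) (th ga : 'I_d -> 'I_d -> R).
Hypotheses (e_sym : symmetric e) (e_acyclic : ~ has_cycle e).
Hypothesis e_connected : forall u v, connect e u v.
Hypotheses (th_bounds : forall i j, e i j -> 0 < th i j < 1)
           (ga_bounds : forall i j, e i j -> 0 < ga i j < 1).
Hypothesis th_ga : forall i j, e i j -> th j i = ga i j.
Implicit Types (x : 'I_d -> R) (k u v : 'I_d).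

Let excess x i j := edge_excess (th i j) (ga i j) (x i) (x j).

Lemma th_in01 i j : e i j -> 0 < th i j <= 1.
Proof. by move/th_bounds/andP=> [-> /ltW]. Qed.

Lemma ga_in01 i j : e i j -> 0 < ga i j <= 1.
Proof. by move/ga_bounds/andP=> [-> /ltW]. Qed.

Lemma th_ge0 i j : e i j -> 0 <= th i j.
Proof. by case/th_in01/andP => /ltW. Qed.

Lemma ga_ge0 i j : e i j -> 0 <= ga i j.
Proof. by case/ga_in01/andP => /ltW. Qed.

Lemma excess_ge0 x i j : e i j -> 0 <= excess x i j.
Proof. by move=> eij; rewrite edge_excess_ge0 ?th_in01 ?ga_in01. Qed.

Lemma excessC x i j : e i j -> excess x i j = excess x j i.
Proof.
move=> eij; have eji : e j i by rewrite e_sym.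
by rewrite /excess (th_ga eij) -(th_ga eji) edge_excessC.
Qed.

Lemma vertex_le_sum_sub_edge_min x r : (forall s, 0 <= x s) ->
  x r <= \sum_s x s - edge_sum e (fun i j => Num.min (x i) (x j)).
Proof.
move=> x0; rewrite lerBrDr; have := edge_sum_min_forest (S := [set r]) e_sym e_acyclic x0.
by rewrite big_set1; apply=> s t; rewrite !inE => /eqP-> /eqP->.
Qed.

Lemma tree_gauge_lower k p x : uniq (k :: p) -> path e k p -> p != [::] ->
    (forall s, 0 <= x s) ->
  edge_gauge (path_max th k p) (path_max ga k p) (x k) (x (last k p))
    <= tree_gauge e th ga x.
Proof.
move=> p_uniq p_path p_nil x0; rewrite tree_gaugeE edge_gaugeE.
apply: lerD; first by rewrite ge_max !vertex_le_sum_sub_edge_min.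
apply: le_trans (edge_sum_path e_sym p_path p_uniq (@excess_ge0 x) (@excessC x)).
apply: edge_excess_path; [exact: path_max_in01 p_path p_nil th_in01 |
  exact: path_max_in01 p_path p_nil ga_in01 |].
move=> u v uv; have euv := path_edges_rel p_path uv.
have [/andP[th0 _] /andP[ga0 _]] := (th_in01 euv, ga_in01 euv).
by rewrite th0 ga0 !(path_max_ge _ uv).
Qed.

(* Rooting parent links at v, every w other than u and v has the value of its parent, as the
   link from w to its parent is not the deleted edge. *)
Lemma sum_le_max_cut x u v : (forall s, 0 <= x s) -> e u v -> u != v ->
    (forall i j, del_edge e u v i j -> x i = x j) ->
  \sum_s x s <= Num.max (x u) (x v) + edge_sum e (fun i j => Num.min (x i) (x j)).
Proof.
move=> x0 euv uv xE; have [par [h par_spec]] := exists_parent (e_connected v).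
have min0 i j : 0 <= Num.min (x i) (x j) by rewrite le_min !x0.
have := edge_sum_parent (G := fun i j => Num.min (x i) (x j)) e_sym par_spec
  (fun i j _ => min0 i j) (fun i j _ => minC _ _).
rewrite (bigD1 u) //= => parent_sum; rewrite (bigD1 v) //= (bigD1 u) //=.
move: parent_sum.
have -> : \sum_(w | (w != v) && (w != u)) Num.min (x w) (x (par w)) =
          \sum_(w | (w != v) && (w != u)) x w.
  apply: eq_bigr => w /andP[wv wu]; have /andP[Ew _] := par_spec w wv.
  by rewrite (xE (par w) w) ?minxx // /del_edge Ew (negbTE wv) (negbTE wu) !andbF.
have min_u : Num.min (x u) (x v) <= Num.min (x u) (x (par u)).
  have /andP[Eu _] := par_spec u uv; case: (par u =P v) => [-> // | pv].
  rewrite (xE (par u) u) ?minxx ?ge_min ?lexx //.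
  by rewrite /del_edge Eu (negbTE uv) (introF eqP pv) andbF.
have := addr_max_min (x u) (x v); lra.
Qed.

Lemma edge_sum_excess_cut x u v : e u v -> u != v ->
    (forall i j, del_edge e u v i j -> x i = x j) ->
  edge_sum e (excess x) = excess x u v.
Proof.
move=> euv uv xE; rewrite (edge_sum_del e_sym euv uv); last by apply: excessC; rewrite e_sym.
rewrite /edge_sum big1 ?addr0 // => q /andP[_ Eq].
by rewrite /excess (xE _ _ Eq) edge_excessxx.
Qed.

Lemma tree_gauge_upper_edge k p1 v p2 (a b : R) :
    uniq (k :: p1 ++ v :: p2) -> path e k (p1 ++ v :: p2) -> 0 <= a -> 0 <= b ->
  exists x, [/\ forall s, 0 <= x s, x k = a, x (last v p2) = b &
    tree_gauge e th ga x <= edge_gauge (th (last k p1) v) (ga (last k p1) v) a b].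
Proof.
move=> p_uniq p_path a0 b0.
have [/= nvu nvk nvl] := del_path_edge_separates e_sym e_acyclic p_path p_uniq.
set u := last k p1 in nvu nvk nvl *; set E' := del_edge e u v in nvu nvk nvl.
have euv : e u v by move: p_path; rewrite cat_path => /andP[_ /andP[]].
have uv : u != v by apply: contraNneq nvu => ->; exact: connect0.
pose x w := if connect E' v w then b else a.
have xE i j : E' i j -> x i = x j.
  move=> Eij; rewrite /x; congr (if _ then _ else _); apply/idP/idP => vc.
    exact: connect_trans vc (connect1 Eij).
  by apply: connect_trans vc (connect1 _); rewrite /E' (del_edge_sym _ _ e_sym).
have x0 s : 0 <= x s by rewrite /x; case: ifP.
have [xu xv] : x u = a /\ x v = b by rewrite /x (negbTE nvu) connect0.
exists x; split => //.
- by rewrite /x (negbTE nvk).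
- by rewrite /x nvl.
rewrite tree_gaugeE (edge_sum_excess_cut euv uv xE) edge_gaugeE /excess xu xv.
have := sum_le_max_cut x0 euv uv xE.
rewrite xu xv; lra.
Qed.

Lemma tree_gauge_upper k p (a b : R) : uniq (k :: p) -> path e k p -> p != [::] ->
    0 <= a -> 0 <= b ->
  exists x, [/\ forall s, 0 <= x s, x k = a, x (last k p) = b &
    tree_gauge e th ga x <= edge_gauge (path_max th k p) (path_max ga k p) a b].
Proof.
move=> p_uniq p_path p_nil a0 b0; have [ba | ab] := leP b a.
  have [p1 [v [p2 [pE tmax]]]] := path_max_attained p_path th_ge0 p_nil.
  move: p_uniq p_path tmax; rewrite pE => p_uniq p_path tmax.
  have [x [x0 xk xl ub]] := tree_gauge_upper_edge p_uniq p_path a0 b0.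
  exists x; split=> //; first by rewrite last_cat.
  by apply: le_trans ub _; rewrite !edge_gauge_ge // tmax.
have [p1 [v [p2 [pE gmax]]]] := path_max_attained p_path ga_ge0 p_nil.
move: p_uniq p_path gmax; rewrite pE => p_uniq p_path gmax.
have [x [x0 xk xl ub]] := tree_gauge_upper_edge p_uniq p_path a0 b0.
exists x; split=> //; first by rewrite last_cat.
by apply: le_trans ub _; rewrite !edge_gauge_le ?gmax // ltW.
Qed.

End TreeGauge.

Unset Implicit Arguments.

Theorem proposition9 (R : realType) (d : nat) (e : rel 'I_d)
    (th ga : 'I_d -> 'I_d -> R) :
  is_tree e ->
  (forall i j, e i j -> 0 < th i j < 1) ->
  (forall i j, e i j -> 0 < ga i j < 1) ->
  (forall i j, e i j -> th j i = ga i j) ->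
  forall (k l : 'I_d) (p : seq 'I_d),
    (k < l)%N ->
    uniq (k :: p) -> path e k p -> last k p = l ->
    let tmax := path_max th k p in
    let gmax := path_max ga k p in
    forall xk xl : R, 0 <= xk -> 0 <= xl ->
      (* g_{k,l}(xk,xl) = min over x_s >= 0 (s <> k,l) of g(x) equals the formula *)
      (forall x : 'I_d -> R, (forall s, 0 <= x s) -> x k = xk -> x l = xl ->
         edge_gauge tmax gmax xk xl <= tree_gauge e th ga x) /\
      (exists x : 'I_d -> R, [/\ forall s, 0 <= x s, x k = xk, x l = xl &
         tree_gauge e th ga x = edge_gauge tmax gmax xk xl]).
Proof.
move=> [[_ e_sym] e_connected e_acyclic] th_bounds ga_bounds th_ga k l p kl.
move=> p_uniq p_path p_last.
have p_nil : p != [::] by apply: contraTneq kl => p0; rewrite -p_last p0 ltnn.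
subst l; move=> tmax gmax xk xl xk0 xl0.
have lower := tree_gauge_lower e_sym e_acyclic th_bounds ga_bounds th_ga p_uniq p_path p_nil.
split=> [x x0 <- <- | ]; first exact: lower.
have [x [x0 xk_def xl_def upper]] := tree_gauge_upper e_sym e_acyclic e_connected
  th_bounds ga_bounds th_ga p_uniq p_path p_nil xk0 xl0.
by exists x; split=> //; apply/le_anti; rewrite upper -xk_def -xl_def lower.
Qed.
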